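(* In the group-based tree model described in the context (with arbitrary real edge parameters), let $e$ be an internal edge of $\mathscr{T}$ with endpoints $\nu$ and $\nu'$. Choose leaves $i,j$ such that the path between $i$ and $j$ contains $\nu$ but not $\nu'$, and leaves $i',j'$ such that the path between $i'$ and $j'$ contains $\nu'$ but not $\nu$. For $a,b,c,d\in G$ let $z(a,b,c,d)\in G^m$ assign $a,b,c,d$ to leaves $i,j,i',j'$ respectively and $0$ to all other leaves. Then for every $h\in G$ the denominator below is nonzero and $$\big[\check f^{(e)}(h)\big]^2=\frac{q_{z(h,0,-h,0)}\;q_{z(0,-h,0,h)}}{q_{z(h,-h,0,0)}\;q_{z(0,0,-h,h)}}.$$
   Context: Group-based model on a tree. $G$ is a finite abelian group written additively with identity $0$; fix $G\cong\prod_k\mathbb{Z}_{n_k}$ and for $g,h\in G$ put $\hat g(h)=\prod_k\exp(2\pi i\,g_kh_k/n_k)$. The Fourier transform of $a:G\to\mathbb{C}$ is $\check a(g)=\sum_{h\in G}\hat g(h)a(h)$. $\mathscr{T}$ is a finite tree with $m$ leaves, one of which is designated the root leaf $r$. Each edge $e$ carries a function $\psi^{(e)}:G\to\mathbb{R}$ with $\sum_g\psi^{(e)}(g)=0$ and $\psi^{(e)}(g)=\psi^{(e)}(-g)$ (its values at $g\ne0$ are the edge parameters of $e$); put $Q^{(e)}_{g,h}=\psi^{(e)}(h-g)$, $P^{(e)}=\exp(Q^{(e)})$, $f^{(e)}(h)=P^{(e)}_{0,h}$, so $P^{(e)}_{g,h}=f^{(e)}(h-g)$. Edges are directed away from $r$.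 For $\mathbf g\in G^{m}$ (indexed by all leaves, $r$ included), $p_{\mathbf g}=\sum_\sigma\prod_{e=(u\to v)}P^{(e)}_{\sigma(u),\sigma(v)}$, the sum over all maps $\sigma$ from vertices to $G$ with $\sigma(r)=0$ and $\sigma$ equal to $\mathbf g$ on the leaves. The Fourier transform is $q_{\mathbf g}=\sum_{\mathbf h\in G^m}\prod_{x}\hat g_x(h_x)\,p_{\mathbf h}$. For an edge $e$, $\Lambda(e)$ is the set of leaves whose path to $r$ contains $e$, and ${}^*g_e=\sum_{x\in\Lambda(e)}g_x$. It is a known fact (Hendy; Evans–Speed) that $q_{\mathbf g}=\prod_{e}\check f^{(e)}({}^*g_e)$ for all $\mathbf g\in G^m$. An internal edge is one neither of whose endpoints is a leaf. *)

From Stdlib Require Import Reals.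
From mathcomp Require Import all_boot all_algebra.
Set Implicit Arguments. Unset Strict Implicit. Unset Printing Implicit Defensive.

Definition C := (R * R)%type.
Definition C0 : C := (R0, R0).
Definition C1 : C := (R1, R0).
Definition Cadd (x y : C) : C := (Rplus x.1 y.1, Rplus x.2 y.2).
Definition Cmul (x y : C) : C :=
  (Rminus (Rmult x.1 y.1) (Rmult x.2 y.2), Rplus (Rmult x.1 y.2) (Rmult x.2 y.1)).
Definition Cinv (x : C) : C :=
  let d := Rplus (Rmult x.1 x.1) (Rmult x.2 x.2) in
  (Rdiv x.1 d, Ropp (Rdiv x.2 d)).
Definition Cdiv (x y : C) : C := Cmul x (Cinv y).
Definition RtoC (a : R) : C := (a, R0).
Definition cis (t : R) : C := (cos t, sin t).

(* The group G = prod_k Z_{n_k}, with n_k = (nn k).+1 >= 1.           *)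
Definition grp (K : nat) (nn : 'I_K -> nat) : finType :=
  {dffun forall k : 'I_K, 'I_(nn k).+1}.

Section Group.
Variables (K : nat) (nn : 'I_K -> nat).
Local Notation G := (grp nn).

Definition g0 : G := [ffun k => (0%R : 'I_(nn k).+1)].
Definition gadd (g h : G) : G := [ffun k => (g k + h k)%R].
Definition gopp (g : G) : G := [ffun k => (- g k)%R].
Definition gsub (g h : G) : G := gadd g (gopp h).

Definition chr (g h : G) : C :=
  \big[Cmul/C1]_(k : 'I_K)
     cis (Rdiv (Rmult (Rmult (Rmult (INR 2) PI) (INR (g k))) (INR (h k)))
               (INR (nn k).+1)).

Definition fourier (a : G -> R) (g : G) : C :=
  \big[Cadd/C0]_(h : G) Cmul (chr g h) (RtoC (a h)).

Fixpoint mpow (Q : G -> G -> R) (k : nat) (g h : G) : R :=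
  match k with
  | O => if g == h then R1 else R0
  | S k' => \big[Rplus/R0]_(l : G) Rmult (mpow Q k' g l) (Q l h)
  end.

Definition is_mexp (Q P : G -> G -> R) : Prop :=
  forall g h : G,
    Un_cv (fun N => sum_f_R0 (fun k => Rdiv (mpow Q k g h) (INR (Factorial.fact k))) N)
          (P g h).
End Group.

(* (undirected) edges are {parent v, v} for v <> r; the edge indexed   *)
(* by v is directed parent v -> v (away from r).                       *)
Section Tree.
Variables (V : finType) (r : V) (par : V -> V).

Definition is_rooted_tree : Prop :=
  par r = r /\ forall v : V, exists k : nat, iter k par v = r.

Definition children (u : V) : {set V} := [set c | (c != r) && (par c == u)].
Definition degree (u : V) : nat := (u != r) + #|children u|.
Definition is_leaf (u : V) : bool := degree u == 1.

Definition Leaf : finType := {x : V | is_leaf x}.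

Definition adj : rel V :=
  fun u w => ((u != r) && (par u == w)) || ((w != r) && (par w == u)).

Definition on_path (x y w : V) : Prop :=
  exists s : seq V, [/\ path adj x s, last x s = y, uniq (x :: s) & w \in x :: s].

Definition internal_edge (v : V) : bool :=
  [&& v != r, ~~ is_leaf v & ~~ is_leaf (par v)].
End Tree.

Section Model.
Variables (K : nat) (nn : 'I_K -> nat) (V : finType) (r : V) (par : V -> V).
Local Notation G := (grp nn).
Local Notation Lf := (Leaf r par).
Variable P : V -> G -> G -> R.   (* P v = transition matrix of edge par v -> v *)

Definition fedge (v : V) (h : G) : R := P v (g0 nn) h.

Definition pprob (g : {ffun Lf -> G}) : R :=
  \big[Rplus/R0]_(s : {ffun V -> G} |
                  (s r == g0 nn) && [forall x : Lf, s (val x) == g x])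
     \big[Rmult/R1]_(v : V | v != r) P v (s (par v)) (s v).

Definition qF (g : {ffun Lf -> G}) : C :=
  \big[Cadd/C0]_(h : {ffun Lf -> G})
     Cmul (\big[Cmul/C1]_(x : Lf) chr (g x) (h x)) (RtoC (pprob h)).

Definition zvec (i j i' j' : V) (a b c d : G) : {ffun Lf -> G} :=
  [ffun x : Lf => let y := val x in
     if y == i then a else if y == j then b else if y == i' then c
     else if y == j' then d else g0 nn].
End Model.

Arguments pprob {K nn V} r par P g.
Arguments qF {K nn V} r par P g.
Arguments zvec {K nn V} r par i j i' j' a b c d.
Arguments fedge {K nn V} P v h.

(* Q^(w) is a circulant matrix whose row psi^(w) is
      centred and even, so P^(w) = exp(Q^(w)) is again circulant and the
      characters of G diagonalise it: \check f^(w) = exp (lam_w), where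
      lam_w is the Fourier transform of psi^(w), real, even, lam_w 0 = 0.
   2. Hendy's factorisation.  Reparametrising the internal states by their
      increments along the edges gives q_g = prod_w \check f^(w)(S_w g),
      where S_w g sums g over the leaves below w.  Together with 1 this
      writes q_g = exp (L g) with L g = sum_w lam_w (S_w g).
   3. Quartet bookkeeping.  For the four transforms in the formula, S_w is
      determined by which of i, j, i', j' lie below w.  Simple paths in the
      tree show that v separates {i,j} from {i',j'}, while no other edge
      separates {i,j} from {i',j'} or both i from j and i' from j'.  Edge
      by edge the exponents L then cancel, except at v, which contributes
      lam_v h + lam_v h.
   The theorem follows by exponentiating this identity of exponents. *)

From Pilot Require Import Defs.
From Stdlib Require Import Reals Lra.
From HB Require Import structures.
From mathcomp Require Import all_boot all_algebra.
Set Implicit Arguments. Unset Strict Implicit. Unset Printing Implicit Defensive.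
Local Open Scope R_scope.

(* The Stdlib binomial coefficient [C] and constant [C1] shadow the complex
   numbers of the model. *)
Local Notation C := Defs.C.
Local Notation C1 := Defs.C1.

Lemma Rplus_id : left_id R0 Rplus. Proof. exact: Rplus_0_l. Qed.
Lemma Rmult_id : left_id R1 Rmult. Proof. exact: Rmult_1_l. Qed.
Lemma Rplus_assoc_law : associative Rplus. Proof. by move=> x y z; rewrite Rplus_assoc. Qed.
Lemma Rmult_assoc_law : associative Rmult. Proof. by move=> x y z; rewrite Rmult_assoc. Qed.
Lemma Rmult_zero_l : left_zero R0 Rmult. Proof. exact: Rmult_0_l. Qed.
Lemma Rmult_zero_r : right_zero R0 Rmult. Proof. exact: Rmult_0_r. Qed.
Lemma Rmult_distr_l : left_distributive Rmult Rplus. Proof. exact: Rmult_plus_distr_r. Qed.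
Lemma Rmult_distr_r : right_distributive Rmult Rplus. Proof. exact: Rmult_plus_distr_l. Qed.
HB.instance Definition _ :=
  Monoid.isComLaw.Build R R0 Rplus Rplus_assoc_law Rplus_comm Rplus_id.
HB.instance Definition _ :=
  Monoid.isComLaw.Build R R1 Rmult Rmult_assoc_law Rmult_comm Rmult_id.
HB.instance Definition _ := Monoid.isMulLaw.Build R R0 Rmult Rmult_zero_l Rmult_zero_r.
HB.instance Definition _ := Monoid.isAddLaw.Build R Rmult Rplus Rmult_distr_l Rmult_distr_r.

Lemma Cext (x y : C) : x.1 = y.1 -> x.2 = y.2 -> x = y.
Proof. by case: x y => a b [c d] /= -> ->. Qed.

Ltac Cring := intros; repeat (hnf; intros); apply: Cext;
  rewrite /Cadd /Cmul /RtoC /C0 /C1 /=; ring.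

Lemma CaddA : associative Cadd. Proof. Cring. Qed.
Lemma CaddC : commutative Cadd. Proof. Cring. Qed.
Lemma Cadd0 : left_id C0 Cadd. Proof. Cring. Qed.
Lemma CmulA : associative Cmul. Proof. Cring. Qed.
Lemma CmulC : commutative Cmul. Proof. Cring. Qed.
Lemma Cmul1 : left_id C1 Cmul. Proof. Cring. Qed.
Lemma Cmul0l : left_zero C0 Cmul. Proof. Cring. Qed.
Lemma Cmul0r : right_zero C0 Cmul. Proof. Cring. Qed.
Lemma CmulDl : left_distributive Cmul Cadd. Proof. Cring. Qed.
Lemma CmulDr : right_distributive Cmul Cadd. Proof. Cring. Qed.
HB.instance Definition _ := Monoid.isComLaw.Build C C0 Cadd CaddA CaddC Cadd0.
HB.instance Definition _ := Monoid.isComLaw.Build C C1 Cmul CmulA CmulC Cmul1.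
HB.instance Definition _ := Monoid.isMulLaw.Build C C0 Cmul Cmul0l Cmul0r.
HB.instance Definition _ := Monoid.isAddLaw.Build C Cmul Cadd CmulDl CmulDr.

Lemma RtoC_sum (I : finType) (A : pred I) (F : I -> R) :
  RtoC (\big[Rplus/R0]_(i | A i) F i) = \big[Cadd/C0]_(i | A i) RtoC (F i).
Proof. by apply: big_morph; Cring. Qed.

Lemma RtoC_prod (I : finType) (A : pred I) (F : I -> R) :
  RtoC (\big[Rmult/R1]_(i | A i) F i) = \big[Cmul/C1]_(i | A i) RtoC (F i).
Proof. by apply: big_morph; Cring. Qed.

Lemma RtoC_mul (a b : R) : RtoC (a * b) = Cmul (RtoC a) (RtoC b).
Proof. Cring. Qed.

Definition Cconj (x : C) : C := (x.1, - x.2).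

Lemma Cconj_mul (a b : C) : Cconj (Cmul a b) = Cmul (Cconj a) (Cconj b).
Proof. rewrite /Cconj; Cring. Qed.

Lemma Cconj_sum (I : finType) (F : I -> C) :
  Cconj (\big[Cadd/C0]_(i : I) F i) = \big[Cadd/C0]_(i : I) Cconj (F i).
Proof. by apply: big_morph; rewrite /Cconj; Cring. Qed.

Lemma Cconj_prod (I : finType) (F : I -> C) :
  Cconj (\big[Cmul/C1]_(i : I) F i) = \big[Cmul/C1]_(i : I) Cconj (F i).
Proof. by apply: big_morph; rewrite /Cconj; Cring. Qed.

Lemma Cfst_sum (I : finType) (F : I -> C) :
  (\big[Cadd/C0]_(i : I) F i).1 = \big[Rplus/R0]_(i : I) (F i).1.
Proof. exact: (big_morph fst). Qed.

Lemma Csnd_sum (I : finType) (F : I -> C) :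
  (\big[Cadd/C0]_(i : I) F i).2 = \big[Rplus/R0]_(i : I) (F i).2.
Proof. exact: (big_morph snd). Qed.

Lemma sum_prod_pinned (V T : finType) (r : V) (t0 : T) (F : V -> T -> C) :
  \big[Cadd/C0]_(d : {ffun V -> T} | d r == t0) \big[Cmul/C1]_(w | w != r) F w (d w) =
  \big[Cmul/C1]_(w | w != r) \big[Cadd/C0]_(t : T) F w t.
Proof.
pose F' w t := if w == r then (if t == t0 then C1 else C0) else F w t.
have pin_root : \big[Cmul/C1]_(w : V) \big[Cadd/C0]_(t : T) F' w t =
                \big[Cmul/C1]_(w | w != r) \big[Cadd/C0]_(t : T) F w t.
  rewrite (bigD1 r) //= /F' eqxx (bigD1 t0) //= eqxx big1 => [|t /negPf -> //].
  rewrite Monoid.mulm1 Monoid.mul1m.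
  by apply: eq_bigr => w /negPf w_r; apply: eq_bigr => t _; rewrite w_r.
rewrite -pin_root bigA_distr_bigA big_mkcond /=; apply: eq_bigr => d _.
rewrite [RHS](bigD1 r) //= /F' eqxx.
rewrite [in RHS](eq_bigr (fun w => F w (d w))) => [|w /negPf -> //].
by case: (d r == t0); rewrite ?Monoid.mul1m ?Monoid.mul0m.
Qed.

Section GroupLaws.
Variables (K : nat) (nn : 'I_K -> nat).
Local Notation G := (grp nn).
Local Notation o := (g0 nn).
Implicit Types x y : G.

Lemma gaddC : commutative (@gadd K nn).
Proof. by move=> x y; apply/ffunP => k; rewrite !ffunE GRing.addrC. Qed.
Lemma gaddA : associative (@gadd K nn).
Proof. by move=> x y z; apply/ffunP => k; rewrite !ffunE GRing.addrA. Qed.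
Lemma gadd0g : left_id o (@gadd K nn).
Proof. by move=> x; apply/ffunP => k; rewrite !ffunE GRing.add0r. Qed.
Lemma gaddg0 x : gadd x o = x.
Proof. by rewrite gaddC gadd0g. Qed.
Lemma gaddN x : gadd x (gopp x) = o.
Proof. by apply/ffunP => k; rewrite !ffunE GRing.subrr. Qed.
Lemma gaddNg x : gadd (gopp x) x = o.
Proof. by rewrite gaddC gaddN. Qed.
Lemma goppK x : gopp (gopp x) = x.
Proof. by apply/ffunP => k; rewrite !ffunE GRing.opprK. Qed.
Lemma goppD x y : gopp (gadd x y) = gadd (gopp x) (gopp y).
Proof. by apply/ffunP => k; rewrite !ffunE GRing.opprD. Qed.
Lemma gaddK x y : gsub (gadd x y) y = x.
Proof. by rewrite /gsub -gaddA gaddN gaddg0. Qed.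
Lemma gsubK x y : gadd (gsub x y) y = x.
Proof. by rewrite /gsub -gaddA gaddNg gaddg0. Qed.
Lemma gsubxx x : gsub x x = o.
Proof. exact: gaddN. Qed.
Lemma gsubDr x y z : gsub x (gadd y z) = gsub (gsub x z) y.
Proof. by rewrite /gsub goppD (gaddC (gopp y)) gaddA. Qed.
Lemma gsub_eq0 x y : (gsub x y == o) = (x == y).
Proof. by apply/eqP/eqP => [e|->]; [rewrite -(gsubK x y) e gadd0g | exact: gsubxx]. Qed.
Lemma gaddI y : injective (fun x => gadd x y).
Proof. by move=> a b /= e; rewrite -(gaddK a y) e gaddK. Qed.
Lemma gopp_inj : injective (@gopp K nn).
Proof. exact: can_inj goppK. Qed.
End GroupLaws.

HB.instance Definition _ (K : nat) (nn : 'I_K -> nat) :=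
  Monoid.isComLaw.Build (grp nn) (g0 nn) (@gadd K nn)
    (@gaddA K nn) (@gaddC K nn) (@gadd0g K nn).

(* With [ang n a b] = 2 pi a b / (n+1), one has
   chr g h = prod_k exp (i ang n_k (g k) (h k)); since the angle is
   symmetric and additive modulo 2 pi in each argument, chr is a symmetric
   bicharacter with chr s (- g) = conj (chr s g). *)
Definition ang (n a b : nat) : R := INR 2 * PI * INR a * INR b / INR n.+1.

Lemma cis_add s t : cis (s + t) = Cmul (cis s) (cis t).
Proof. apply: Cext; rewrite /cis /Cmul /= ?cos_plus ?sin_plus; ring. Qed.

Lemma cis_period t k : cis (t + 2 * INR k * PI) = cis t.
Proof. by rewrite /cis cos_period sin_period. Qed.

Lemma ang_sym n a b : ang n a b = ang n b a.
Proof. by rewrite /ang; field; apply: not_0_INR. Qed.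

Lemma ang_addr n a x y : ang n a (x + y)%N = ang n a x + ang n a y.
Proof. by rewrite /ang plus_INR; field; apply: not_0_INR. Qed.

Lemma cis_ang_mod n a u : cis (ang n a (u %% n.+1)) = cis (ang n a u).
Proof.
have full_turns : ang n a (u %/ n.+1 * n.+1)%N = 2 * INR (a * (u %/ n.+1))%N * PI.
  by rewrite /ang !mult_INR; simpl (INR 2); field; apply: not_0_INR.
by rewrite {2}(divn_eq u n.+1) addnC ang_addr full_turns cis_period.
Qed.

Section Characters.
Variables (K : nat) (nn : 'I_K -> nat).
Local Notation G := (grp nn).
Local Notation o := (g0 nn).
Implicit Types g s x y : G.

Lemma chrE g h : chr g h = \big[Cmul/C1]_(k : 'I_K) cis (ang (nn k) (g k) (h k)).
Proof. by []. Qed.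

Lemma chr_sym g h : chr g h = chr h g.
Proof. by rewrite !chrE; apply: eq_bigr => k _; rewrite ang_sym. Qed.

Lemma chr_addr g x y : chr g (gadd x y) = Cmul (chr g x) (chr g y).
Proof.
rewrite !chrE -big_split /=; apply: eq_bigr => k _.
by rewrite ffunE /= cis_ang_mod ang_addr cis_add.
Qed.

Lemma chr_addl g x y : chr (gadd x y) g = Cmul (chr x g) (chr y g).
Proof. by rewrite !(chr_sym _ g) chr_addr. Qed.

Lemma chr_0r g : chr g o = C1.
Proof.
rewrite chrE big1 // => k _; rewrite ffunE /ang /= Rmult_0_r /Rdiv Rmult_0_l.
by rewrite /cis cos_0 sin_0.
Qed.

Lemma chr_0l g : chr o g = C1.
Proof. by rewrite chr_sym chr_0r. Qed.

Lemma chr_oppr s g : chr s (gopp g) = Cconj (chr s g).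
Proof.
rewrite !chrE Cconj_prod; apply: eq_bigr => k _.
rewrite ffunE /= cis_ang_mod.
have g_le : (g k <= (nn k).+1)%N by apply: ltnW.
have -> : ang (nn k) (s k) ((nn k).+1 - g k)%N =
          - ang (nn k) (s k) (g k) + 2 * INR (s k) * PI.
  rewrite /ang minus_INR; last by apply/leP.
  by simpl (INR 2); field; apply: not_0_INR.
by rewrite cis_period /cis /Cconj cos_neg sin_neg.
Qed.

Lemma chr_oppl s g : chr (gopp s) g = Cconj (chr g s).
Proof. by rewrite chr_sym chr_oppr. Qed.

Lemma chr_sumr (I : finType) (A : pred I) (F : I -> G) g :
  chr g (\big[@gadd K nn/o]_(i | A i) F i) = \big[Cmul/C1]_(i | A i) chr g (F i).
Proof. exact: (big_morph (chr g) (chr_addr g) (chr_0r g)). Qed.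

Lemma chr_suml (I : finType) (A : pred I) (F : I -> G) g :
  chr (\big[@gadd K nn/o]_(i | A i) F i) g = \big[Cmul/C1]_(i | A i) chr (F i) g.
Proof. exact: (big_morph (fun x => chr x g) (fun x y => chr_addl g x y) (chr_0l g)). Qed.
End Characters.

Lemma Un_cv_const (c : R) : Un_cv (fun _ => c) c.
Proof. by move=> eps eps_gt0; exists 0%N => n _; rewrite /Rdist Rminus_diag Rabs_R0. Qed.

Lemma Un_cv_big (I : finType) (u : I -> nat -> R) (l : I -> R) :
  (forall i, Un_cv (u i) (l i)) ->
  Un_cv (fun N => \big[Rplus/R0]_(i : I) u i N) (\big[Rplus/R0]_(i : I) l i).
Proof.
move=> u_cv; rewrite unlock /=; elim: (index_enum I) => [|a s IHs] /=.
  exact: Un_cv_const.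
by apply: CV_plus; [apply: u_cv | apply: IHs].
Qed.

Lemma sum_f_R0_big (I : finType) (F : I -> nat -> R) N :
  sum_f_R0 (fun k => \big[Rplus/R0]_(i : I) F i k) N =
  \big[Rplus/R0]_(i : I) sum_f_R0 (F i) N.
Proof. by elim: N => [|N IHN] //=; rewrite IHN -big_split. Qed.

(* The exponent of an edge transform: the real part of the Fourier transform
   of the edge row psi (which is real when psi is even). *)
Definition lam (K : nat) (nn : 'I_K -> nat) (psi : grp nn -> R) (s : grp nn) : R :=
  (fourier psi s).1.

Section EdgeAnalysis.
Variables (K : nat) (nn : 'I_K -> nat).
Local Notation G := (grp nn).
Local Notation o := (g0 nn).
Variable psi : G -> R.
Hypothesis psi_centred : \big[Rplus/R0]_(g : G) psi g = R0.
Hypothesis psi_even : forall g, psi g = psi (gopp g).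
Local Notation Q := (fun g h : G => psi (gsub h g)).
Variable P : G -> G -> R.
Hypothesis P_exp : is_mexp Q P.

Lemma mpow_circulant k (g h : G) : mpow Q k g h = mpow Q k o (gsub h g).
Proof.
elim: k h => [|k IHk] h /=; first by rewrite [o == _]eq_sym gsub_eq0 eq_sym.
rewrite (reindex_inj (@gaddI _ _ g)) /=; apply: eq_bigr => l _.
by rewrite IHk gaddK gsubDr.
Qed.

Lemma P_circulant (g h : G) : P g h = P o (gsub h g).
Proof.
apply: (UL_sequence _ _ _ (P_exp g h)).
apply: (Un_cv_ext _ _ _ _ (P_exp o (gsub h g))) => N.
by apply: PartSum.sum_eq => k _; rewrite [in RHS]mpow_circulant.
Qed.

(* Since psi is even and real, its Fourier transform is real. *)
Lemma fourier_psi_real s : fourier psi s = RtoC (lam psi s).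
Proof.
have conj_fixed : Cconj (fourier psi s) = fourier psi s.
  rewrite /fourier Cconj_sum [in RHS](reindex_inj (@gopp_inj K nn)) /=.
  apply: eq_bigr => g _; rewrite chr_oppr -psi_even Cconj_mul.
  by congr Cmul; rewrite /Cconj /RtoC /= Ropp_0.
apply: Cext => //=; have := congr1 snd conj_fixed; rewrite /Cconj /=; lra.
Qed.

(* Characters are eigenvectors of convolution by psi. *)
Lemma chr_convolution s (l : G) :
  \big[Cadd/C0]_(h : G) Cmul (chr s h) (RtoC (psi (gsub h l))) =
  Cmul (chr s l) (RtoC (lam psi s)).
Proof.
rewrite -fourier_psi_real /fourier big_distrr (reindex_inj (@gaddI _ _ l)) /=.
by apply: eq_bigr => h _; rewrite gaddK chr_addr; Cring.
Qed.

Lemma fourier_components (a : G -> R) s :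
  fourier a s = ((\big[Rplus/R0]_(h : G) ((chr s h).1 * a h)),
                 (\big[Rplus/R0]_(h : G) ((chr s h).2 * a h))).
Proof.
by apply: Cext; rewrite /fourier ?Cfst_sum ?Csnd_sum;
  apply: eq_bigr => h _; rewrite /Cmul /RtoC /=; ring.
Qed.

Lemma fourier_mpow s k : fourier (mpow Q k o) s = RtoC (lam psi s ^ k).
Proof.
rewrite /fourier; elim: k => [|k IHk] /=.
  rewrite (bigD1 o) //= eqxx chr_0r big1 => [|h /negPf]; last by rewrite eq_sym => ->; Cring.
  Cring.
have swap : forall h,
    Cmul (chr s h) (RtoC (\big[Rplus/R0]_(l : G) (mpow Q k o l * psi (gsub h l)))) =
    \big[Cadd/C0]_(l : G) Cmul (RtoC (mpow Q k o l)) (Cmul (chr s h) (RtoC (psi (gsub h l)))).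
  by move=> h; rewrite RtoC_sum big_distrr /=; apply: eq_bigr => l _; Cring.
rewrite (eq_bigr _ (fun h _ => swap h)) exchange_big /=.
under eq_bigr do rewrite -big_distrr /= chr_convolution.
rewrite (eq_bigr (fun l => Cmul (Cmul (chr s l) (RtoC (mpow Q k o l))) (RtoC (lam psi s)))).
  by rewrite -big_distrl /= IHk -RtoC_mul Rmult_comm.
by move=> l _; Cring.
Qed.

Lemma functional_of_P (d : G -> R) :
  Un_cv (fun N => sum_f_R0 (fun k =>
           \big[Rplus/R0]_(h : G) (d h * mpow Q k o h) / INR (Factorial.fact k)) N)
        (\big[Rplus/R0]_(h : G) (d h * P o h)).
Proof.
apply: (Un_cv_ext (fun N => \big[Rplus/R0]_(h : G) (d h *
   sum_f_R0 (fun k => mpow Q k o h / INR (Factorial.fact k)) N))).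
  move=> N; rewrite (PartSum.sum_eq _ (fun k => \big[Rplus/R0]_(h : G)
      (d h * (mpow Q k o h / INR (Factorial.fact k))))); last first.
    by move=> k _; rewrite /Rdiv big_distrl /=; apply: eq_bigr => h _; ring.
  rewrite sum_f_R0_big; apply: eq_bigr => h _.
  by rewrite scal_sum; apply: PartSum.sum_eq => k _; ring.
by apply: Un_cv_big => h; apply: CV_mult; [apply: Un_cv_const | apply: P_exp].
Qed.

Lemma exp_series x :
  Un_cv (sum_f_R0 (fun k => / INR (Factorial.fact k) * x ^ k)) (exp x).
Proof. by rewrite /exp; case: (exist_exp x). Qed.

Lemma fourier_edge_exp s : fourier (fun h => P o h) s = RtoC (exp (lam psi s)).
Proof.
have re k : \big[Rplus/R0]_(h : G) ((chr s h).1 * mpow Q k o h) = lam psi s ^ k.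
  by have := congr1 fst (fourier_mpow s k); rewrite fourier_components.
have im k : \big[Rplus/R0]_(h : G) ((chr s h).2 * mpow Q k o h) = 0.
  by have := congr1 snd (fourier_mpow s k); rewrite fourier_components.
rewrite fourier_components; apply: Cext => /=;
  apply: (UL_sequence _ _ _ (functional_of_P _)).
- apply: (Un_cv_ext _ _ _ _ (exp_series (lam psi s))) => N.
  by apply: PartSum.sum_eq => k _; rewrite re /Rdiv Rmult_comm.
- apply: (Un_cv_ext _ _ _ _ (Un_cv_const 0)) => N.
  rewrite (PartSum.sum_eq _ (fun _ => 0)) => [|k _]; last by rewrite im /Rdiv Rmult_0_l.
  by rewrite sum_cte Rmult_0_l.
Qed.

Lemma lam_even s : lam psi (gopp s) = lam psi s.
Proof.
rewrite /lam /fourier (reindex_inj (@gopp_inj K nn)) /= !Cfst_sum.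
by apply: eq_bigr => g _; rewrite -psi_even !chr_oppl /Cmul /Cconj /RtoC /=; ring.
Qed.

Lemma lam0 : lam psi o = 0.
Proof.
rewrite /lam /fourier Cfst_sum -[RHS]psi_centred.
by apply: eq_bigr => g _; rewrite chr_0l /Cmul /RtoC /=; ring.
Qed.
End EdgeAnalysis.

(* [below par w x]: the vertex w lies on the path from x to the root, i.e.
   x belongs to the subtree hanging from w. *)
Definition below (V : finType) (par : V -> V) (w x : V) : bool := fconnect par x w.

Section RootedTree.
Variables (V : finType) (r : V) (par : V -> V).
Hypothesis par_root : par r = r.
Hypothesis reach_root : forall x : V, exists k, iter k par x = r.

Lemma below_step w x : below par w x = (x == w) || below par w (par x).
Proof. exact: fconnect_eqVf. Qed.

Lemma below_root w : below par w r -> w = r.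
Proof.
have iter_root k : iter k par r = r by elim: k => //= k ->.
by move/iter_findex <-; rewrite iter_root.
Qed.

Lemma below_par v : v != r -> ~~ below par v (par v).
Proof.
move=> v_r; apply/negP => /iter_findex; set n := findex _ _ _ => back.
have period m : iter (m * n.+1) par v = v.
  by elim: m => // m IHm; rewrite mulSn iterD IHm iterSr back.
have [k root_k] := reach_root v.
have := period k; rewrite mulnSr iterD root_k.
have iter_root l : iter l par r = r by elim: l => //= l ->.
by rewrite iter_root => r_v; rewrite r_v eqxx in v_r.
Qed.

Lemma par_neq v : v != r -> par v != v.
Proof. by move=> v_r; apply: contraNneq (below_par v_r) => ->; apply: connect0. Qed.

(* Hendy's change of variables: labellings s of the vertices with s r = 0
   correspond to labellings d of the edges (d x is the increment along the
   edge par x -> x) via partial sums towards the root. *)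
Variables (K : nat) (nn : 'I_K -> nat).
Local Notation G := (grp nn).
Local Notation o := (g0 nn).
Local Notation Lf := (Leaf r par).

Definition cumul (d : {ffun V -> G}) : {ffun V -> G} :=
  [ffun x => \big[@gadd K nn/o]_(w | below par w x && (w != r)) d w].

Definition incr (s : {ffun V -> G}) : {ffun V -> G} :=
  [ffun x => gsub (s x) (s (par x))].

Lemma cumul_root (d : {ffun V -> G}) : cumul d r = o.
Proof. by rewrite ffunE big_pred0 // => w; apply/negP => /andP[/below_root ->]; rewrite eqxx. Qed.

Lemma cumul_step (d : {ffun V -> G}) (x : V) : x != r -> cumul d x = gadd (d x) (cumul d (par x)).
Proof.
move=> x_r; rewrite !ffunE (bigD1 x) /=; last by rewrite /below connect0 x_r.
congr gadd; apply: eq_bigl => w; rewrite below_step.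
have [->|w_x] := eqVneq w x; last by rewrite andbT.
by rewrite (negPf (below_par x_r)) !andbF.
Qed.

Lemma cumul_incr (s : {ffun V -> G}) : s r = o -> cumul (incr s) = s.
Proof.
move=> s_r; apply/ffunP => x; have [k] := reach_root x.
elim: k x => [|k IHk] x /= root_x; first by rewrite root_x cumul_root s_r.
have [->|x_r] := eqVneq x r; first by rewrite cumul_root s_r.
by rewrite cumul_step // IHk -?iterSr // ffunE gsubK.
Qed.

Lemma incr_cumul (d : {ffun V -> G}) : (incr (cumul d) == d) = (d r == o).
Proof.
apply/eqP/eqP => [<-|d_r]; first by rewrite ffunE par_root gsubxx.
apply/ffunP => x; have [->|x_r] := eqVneq x r; first by rewrite ffunE par_root gsubxx.
by rewrite ffunE cumul_step // gaddK.
Qed.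

Definition subtree_sum (g : {ffun Lf -> G}) (w : V) : G :=
  \big[@gadd K nn/o]_(x : Lf | below par w (val x)) g x.

(* Summation by parts: pairing leaf labels with partial sums of edge
   increments is pairing subtree sums with the increments themselves. *)
Lemma chr_leaves_cumul (g : {ffun Lf -> G}) (d : {ffun V -> G}) :
  \big[Cmul/C1]_(x : Lf) chr (g x) (cumul d (val x)) =
  \big[Cmul/C1]_(w | w != r) chr (subtree_sum g w) (d w).
Proof.
under eq_bigr do rewrite ffunE chr_sumr.
rewrite (exchange_big_dep (fun w => w != r)) /=; last by move=> x w _ /andP[].
apply: eq_bigr => w w_r; rewrite chr_suml; apply: eq_bigl => x.
by rewrite w_r andbT.
Qed.

Variable P : V -> G -> G -> R.
Hypothesis P_circulant : forall v, v != r -> forall a b, P v a b = P v o (gsub b a).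

Lemma qF_vertex_sum (g : {ffun Lf -> G}) :
  qF r par P g = \big[Cadd/C0]_(s : {ffun V -> G} | s r == o)
    Cmul (\big[Cmul/C1]_(x : Lf) chr (g x) (s (val x)))
         (RtoC (\big[Rmult/R1]_(v | v != r) P v (s (par v)) (s v))).
Proof.
rewrite [RHS](partition_big (fun s : {ffun V -> G} => [ffun x : Lf => s (val x)]) predT) //=.
apply: eq_bigr => l _; rewrite /pprob RtoC_sum big_distrr /=.
apply: eq_big => [s|s /andP[_ /forallP s_l]].
  congr andb; apply/forallP/eqP => [s_l|<- x]; last by rewrite ffunE.
  by apply/ffunP => x; rewrite ffunE; apply/eqP/s_l.
by congr Cmul; apply: eq_bigr => x _; rewrite (eqP (s_l x)).
Qed.

Theorem qF_factorisation (g : {ffun Lf -> G}) :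
  qF r par P g = \big[Cmul/C1]_(w | w != r) fourier (fedge P w) (subtree_sum g w).
Proof.
rewrite qF_vertex_sum (reindex_onto cumul incr) => [|s /eqP]; last exact: cumul_incr.
rewrite (eq_bigl (fun d : {ffun V -> G} => d r == o)) => [|d]; last first.
  by rewrite cumul_root eqxx incr_cumul.
rewrite /fourier -(sum_prod_pinned r o (fun w t =>
  Cmul (chr (subtree_sum g w) t) (RtoC (fedge P w t)))).
apply: eq_bigr => d d_r.
rewrite big_split /= chr_leaves_cumul RtoC_prod; congr Cmul.
apply: eq_bigr => v v_r; rewrite P_circulant //.
by rewrite /fedge cumul_step // gaddK.
Qed.
End RootedTree.

Definition log_q (V : finType) (r : V) (par : V -> V) (K : nat) (nn : 'I_K -> nat)
    (lf : V -> grp nn -> R) (g : {ffun Leaf r par -> grp nn}) : R :=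
  \big[Rplus/R0]_(w | w != r) lf w (subtree_sum g w).

Lemma qF_exp (K : nat) (nn : 'I_K -> nat) (V : finType) (r : V) (par : V -> V)
    (psi : V -> grp nn -> R) (P : V -> grp nn -> grp nn -> R) :
  is_rooted_tree r par ->
  (forall v, v != r -> forall g, psi v g = psi v (gopp g)) ->
  (forall v, v != r -> is_mexp (fun g h => psi v (gsub h g)) (P v)) ->
  forall g : {ffun Leaf r par -> grp nn},
  qF r par P g = RtoC (exp (log_q (fun w => lam (psi w)) g)).
Proof.
move=> [par_root reach_root] psi_even P_exp g.
rewrite (qF_factorisation par_root reach_root) => [|v v_r a b]; last exact: P_circulant (P_exp v v_r) a b.
rewrite /log_q (big_morph exp exp_plus exp_0) RtoC_prod.
apply: eq_bigr => v v_r.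
by have edge := fourier_edge_exp (psi_even v v_r) (P_exp v v_r); apply: edge.
Qed.

Section TreePaths.
Variables (V : finType) (r : V) (par : V -> V).
Hypothesis par_root : par r = r.
Hypothesis reach_root : forall x : V, exists k, iter k par x = r.
Local Notation adj := (adj r par).
Local Notation below := (below par).

Lemma adj_crossing (w x y : V) : adj x y -> below w x != below w y ->
  ((x == w) && (y == par w)) || ((y == w) && (x == par w)).
Proof.
rewrite /adj => /orP[/andP[_ /eqP <-]|/andP[_ /eqP <-]].
- by rewrite [below w x]below_step; case: (x =P w) => [->|] //=; rewrite eqxx.
- by rewrite [below w y]below_step; case: (y =P w) => [->|] //=; rewrite !eqxx ?orbT.
Qed.

Lemma path_crossing (w x u : V) (s : seq V) : path adj x s -> u \in x :: s ->
  below w x != below w u -> (w \in x :: s) && (par w \in x :: s).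
Proof.
elim: s x => [|y s IHs] x /=; first by rewrite inE => _ /eqP ->; rewrite eqxx.
case/andP => xy ys; rewrite inE => /predU1P[-> |u_in]; first by rewrite eqxx.
have [same|diff] := eqVneq (below w x) (below w y).
  by rewrite same => /(IHs y ys u_in) /andP[w_in pw_in]; rewrite !(in_cons x) w_in pw_in !orbT.
by case/orP: (adj_crossing xy diff) => /andP[/eqP-> /eqP->] _; rewrite !inE !eqxx !orbT.
Qed.

Lemma path_one_side (w x u : V) (s : seq V) : path adj x s ->
  ~~ ((w \in x :: s) && (par w \in x :: s)) -> u \in x :: s -> below w u = below w x.
Proof.
move=> xs not_both u_in; apply/eqP; rewrite eq_sym.
by apply: contraNT not_both; apply: path_crossing.
Qed.

(* A simple path whose ends lie on the same side of an edge stays on that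
   side: leaving and returning would visit w or par w twice. *)
Lemma uniq_path_same_side (w x u : V) (s : seq V) : w != r -> path adj x s ->
  uniq (x :: s) -> below w (last x s) = below w x -> u \in x :: s -> below w u = below w x.
Proof.
move=> w_r xs xs_uniq ends u_in; apply/eqP; rewrite eq_sym; apply/negP => /negP diff.
move: u_in; rewrite inE => /predU1P[u_x|u_s]; first by rewrite u_x eqxx in diff.
move: xs xs_uniq ends; case/path.splitP: u_s => p1 p2.
rewrite cat_path last_cat last_rcons.
case/andP=> prefix suffix xs_uniq ends.
have /andP[w1 pw1] : (w \in x :: rcons p1 u) && (par w \in x :: rcons p1 u).
  by apply: path_crossing prefix _ diff; rewrite -rcons_cons mem_rcons mem_head.
have /andP[w2 pw2] : (w \in u :: p2) && (par w \in u :: p2).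
  by apply: path_crossing suffix (mem_last u p2) _; rewrite ends eq_sym.
move: xs_uniq; rewrite -cat_cons cat_uniq => /and3P[_ /hasPn disjoint _].
have [z [z_prefix z_p2]] : exists z, z \in x :: rcons p1 u /\ z \in p2.
  have [w_u|w_u] := eqVneq w u; last by exists w; move: w2; rewrite inE (negPf w_u).
  exists (par w); split=> //; move: pw2; rewrite inE -w_u.
  by rewrite (negPf (par_neq par_root reach_root w_r)).
by move: (disjoint z z_p2); rewrite z_prefix.
Qed.

Lemma on_path_loop (x a : V) : on_path r par x x a -> a = x.
Proof.
case=> [[|y s]] [_ /= last_x xs_uniq a_in]; first by move: a_in; rewrite inE => /eqP.
by move: xs_uniq; rewrite -last_x /= mem_last.
Qed.

Lemma on_path_crossing (w x y a : V) : on_path r par x y a ->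
  below w x != below w y -> on_path r par x y w.
Proof.
case=> s [xs last_y xs_uniq _] diff; exists s; split=> //.
by have := path_crossing xs (mem_last x s); rewrite last_y => /(_ w diff) /andP[].
Qed.

Lemma on_path_avoiding (w x y a b : V) : on_path r par x y a ->
  ~ on_path r par x y b -> b = w \/ b = par w ->
  below w a = below w x /\ below w y = below w x.
Proof.
case=> s [xs last_y xs_uniq a_in] avoid b_end.
have not_both : ~~ ((w \in x :: s) && (par w \in x :: s)).
  by apply/negP => /andP[w_in pw_in]; apply: avoid; exists s; case: b_end => ->.
by split; apply: path_one_side not_both _; rewrite // -last_y mem_last.
Qed.

Lemma on_path_same_side (w x y a : V) : w != r -> on_path r par x y a ->
  below w y = below w x -> below w a = below w x.
Proof.
move=> w_r [s [xs last_y xs_uniq a_in]] ends.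
by apply: uniq_path_same_side w_r xs xs_uniq _ a_in; rewrite last_y.
Qed.
End TreePaths.

(* Leaf patterns of an edge relative to the quartet ij|i'j': the four
   booleans record which of i, j, i', j' lie below the edge. *)
Definition separates_pairs (a b c d : bool) : bool := [&& a == b, c == d & a != c].
Definition crosses_both (a b c d : bool) : bool := (a != b) && (c != d).

(* The leaf sum below an edge of the vector assigning x1..x4 to i, j, i', j'. *)
Definition gsel (K : nat) (nn : 'I_K -> nat) (b : bool) (y : grp nn) : grp nn :=
  if b then y else g0 nn.
Definition side_sum (K : nat) (nn : 'I_K -> nat) (a b c d : bool)
    (x1 x2 x3 x4 : grp nn) : grp nn :=
  gadd (gadd (gadd (gsel a x1) (gsel b x2)) (gsel c x3)) (gsel d x4).

Section EdgeContribution.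
Variables (K : nat) (nn : 'I_K -> nat).
Local Notation G := (grp nn).
Local Notation o := (g0 nn).
Variable lf : G -> R.
Hypothesis lf_even : forall s, lf (gopp s) = lf s.
Hypothesis lf0 : lf o = 0.

Lemma separating_edge_exponent (a b c d : bool) (h : G) : separates_pairs a b c d ->
  lf (side_sum a b c d h o (gopp h) o) + lf (side_sum a b c d o (gopp h) o h) =
  lf h + lf h +
  (lf (side_sum a b c d h (gopp h) o o) + lf (side_sum a b c d o o (gopp h) h)).
Proof.
by case: a; case: b; case: c; case: d => //= _;
  rewrite /side_sum /gsel ?gaddg0 ?gadd0g ?gaddN ?gaddNg ?lf_even ?lf0; ring.
Qed.

Lemma other_edge_exponent (a b c d : bool) (h : G) :
  ~~ crosses_both a b c d -> ~~ separates_pairs a b c d ->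
  lf (side_sum a b c d h o (gopp h) o) + lf (side_sum a b c d o (gopp h) o h) =
  lf (side_sum a b c d h (gopp h) o o) + lf (side_sum a b c d o o (gopp h) h).
Proof.
by case: a; case: b; case: c; case: d => //= _ _;
  rewrite /side_sum /gsel ?gaddg0 ?gadd0g ?gaddN ?gaddNg ?lf_even ?lf0; ring.
Qed.
End EdgeContribution.

Lemma subtree_sum_zvec (V : finType) (r : V) (par : V -> V) (K : nat)
    (nn : 'I_K -> nat) (i j i' j' w : V) (x1 x2 x3 x4 : grp nn) :
  is_leaf r par i -> is_leaf r par j -> is_leaf r par i' -> is_leaf r par j' ->
  uniq [:: i; j; i'; j'] ->
  subtree_sum (zvec r par i j i' j' x1 x2 x3 x4) w =
  side_sum (below par w i) (below par w j) (below par w i') (below par w j') x1 x2 x3 x4.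
Proof.
move=> i_leaf j_leaf i'_leaf j'_leaf; rewrite /= !inE !negb_or.
case/and4P=> /and3P[ij ii' ij'] /andP[ji' jj'] i'j' _.
have single t y : is_leaf r par t ->
    \big[@gadd K nn/g0 nn]_(x : Leaf r par | below par w (val x)) gsel (val x == t) y =
    gsel (below par w t) y.
  move=> t_leaf; case t_w: (below par w t).
    rewrite (bigD1 (exist _ t t_leaf)) /= ?t_w // /gsel eqxx big1 ?gaddg0 //.
    by move=> x /andP[_ x_t]; case: eqP => // x_t'; case/eqP: x_t; apply: val_inj.
  by rewrite big1 // => x x_w; rewrite /gsel; case: eqP => // x_t; rewrite -x_t x_w in t_w.
rewrite /subtree_sum (eq_bigr (fun x => side_sum (val x == i) (val x == j)
   (val x == i') (val x == j') x1 x2 x3 x4)) => [|[x x_leaf] _].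
  by rewrite /side_sum !big_split /= !single.
rewrite ffunE /side_sum /gsel /=.
case: eqP => [->|_]; first by rewrite (negPf ij) (negPf ii') (negPf ij') !gaddg0.
case: eqP => [->|_]; first by rewrite (negPf ji') (negPf jj') gadd0g !gaddg0.
by case: eqP => [->|_]; rewrite ?(negPf i'j') !gadd0g ?gaddg0.
Qed.

Section Quartet.
Variables (V : finType) (r : V) (par : V -> V).
Hypothesis par_root : par r = r.
Hypothesis reach_root : forall x : V, exists k, iter k par x = r.
Variables (v nu nu' i j i' j' : V).
Hypothesis v_internal : internal_edge r par v.
Hypothesis ends : (nu = par v /\ nu' = v) \/ (nu = v /\ nu' = par v).
Hypothesis path_ij : on_path r par i j nu /\ ~ on_path r par i j nu'.
Hypothesis path_i'j' : on_path r par i' j' nu' /\ ~ on_path r par i' j' nu.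
Local Notation below := (below par).

Lemma v_nonroot : v != r.
Proof. by case/and3P: v_internal. Qed.

Lemma nu_end : nu = v \/ nu = par v.
Proof. by case: ends => [[-> _]|[-> _]]; [right | left]. Qed.

Lemma nu'_end : nu' = v \/ nu' = par v.
Proof. by case: ends => [[_ ->]|[_ ->]]; [left | right]. Qed.

Lemma ends_sides : below v nu != below v nu'.
Proof.
have v_v : below v v by apply: connect0.
by case: ends => [[-> ->]|[-> ->]]; rewrite v_v (negPf (below_par par_root reach_root v_nonroot)).
Qed.

Lemma ends_same_side (w : V) : w != v -> below w nu = below w nu'.
Proof.
move=> w_v; have v_par : below w v = below w (par v).
  by rewrite below_step eq_sym (negPf w_v).
by case: ends => [[-> ->]|[-> ->]].
Qed.

Lemma quartet_separated : separates_pairs (below v i) (below v j) (below v i') (below v j').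
Proof.
have [nu_i j_i] := on_path_avoiding path_ij.1 path_ij.2 nu'_end.
have [nu'_i' j'_i'] := on_path_avoiding path_i'j'.1 path_i'j'.2 nu_end.
by rewrite /separates_pairs j_i j'_i' !eqxx -nu_i -nu'_i' ends_sides.
Qed.

Lemma quartet_not_crossed (w : V) :
  ~~ crosses_both (below w i) (below w j) (below w i') (below w j').
Proof.
apply/andP=> [[ij i'j']].
have [w_i _] := on_path_avoiding (on_path_crossing path_ij.1 ij) path_ij.2 nu'_end.
have [w_i' _] := on_path_avoiding (on_path_crossing path_i'j'.1 i'j') path_i'j'.2 nu_end.
by case/and3P: quartet_separated => _ _; rewrite -w_i -w_i' eqxx.
Qed.

Lemma quartet_not_separated (w : V) : w != r -> w != v ->
  ~~ separates_pairs (below w i) (below w j) (below w i') (below w j').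
Proof.
move=> w_r w_v; apply/and3P=> [[/eqP ij /eqP i'j' ii']].
have nu_i := on_path_same_side par_root reach_root w_r path_ij.1 (esym ij).
have nu'_i' := on_path_same_side par_root reach_root w_r path_i'j'.1 (esym i'j').
by move: ii'; rewrite -nu_i -nu'_i' ends_same_side ?eqxx.
Qed.

Hypotheses (i_leaf : is_leaf r par i) (j_leaf : is_leaf r par j)
           (i'_leaf : is_leaf r par i') (j'_leaf : is_leaf r par j').

(* The four leaves are distinct: a simple path from a leaf to itself cannot
   pass through the internal vertices nu, nu'. *)
Lemma quartet_uniq : uniq [:: i; j; i'; j'].
Proof.
have [nu_int nu'_int] : ~~ is_leaf r par nu /\ ~~ is_leaf r par nu'.
  by case/and3P: v_internal => _ v_int pv_int; case: ends => [[-> ->]|[-> ->]].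
have ij : i != j.
  by apply: contraNneq nu_int => same; move: path_ij.1; rewrite -same => /on_path_loop ->.
have i'j' : i' != j'.
  by apply: contraNneq nu'_int => same; move: path_i'j'.1; rewrite -same => /on_path_loop ->.
have apart x y : below v x != below v y -> x != y by apply: contraNneq => ->.
case/and3P: quartet_separated => /eqP vij /eqP vi'j' vii'.
have [ii' ij' ji' jj'] : [/\ i != i', i != j', j != i' & j != j'].
  by split; apply: apart; rewrite -?vij -?vi'j'.
by rewrite /= !inE !negb_or ij i'j' ii' ij' ji' jj'.
Qed.

Variables (K : nat) (nn : 'I_K -> nat).
Local Notation G := (grp nn).
Local Notation o := (g0 nn).
Variable lf : V -> G -> R.
Hypothesis lf_even : forall w, w != r -> forall s, lf w (gopp s) = lf w s.
Hypothesis lf0 : forall w, w != r -> lf w o = 0.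

Lemma quartet_exponents (h : G) :
  let z := zvec r par i j i' j' in
  log_q lf (z h o (gopp h) o) + log_q lf (z o (gopp h) o h) =
  lf v h + lf v h + (log_q lf (z h (gopp h) o o) + log_q lf (z o o (gopp h) h)).
Proof.
rewrite /log_q -!big_split /= (bigD1 v) ?v_nonroot //= [in RHS](bigD1 v) ?v_nonroot //=.
rewrite !subtree_sum_zvec ?quartet_uniq //.
rewrite (separating_edge_exponent (lf_even v_nonroot) (lf0 v_nonroot)) ?quartet_separated //.
rewrite !Rplus_assoc; congr (_ + (_ + (_ + (_ + _)))).
apply: eq_bigr => w /andP[w_r w_v]; rewrite !subtree_sum_zvec ?quartet_uniq //.
apply: (other_edge_exponent (lf_even w_r));
  [exact: lf0 | exact: quartet_not_crossed | exact: quartet_not_separated].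
Qed.
End Quartet.

Lemma Cdiv_RtoC (x y : R) : y <> 0 -> Cdiv (RtoC x) (RtoC y) = RtoC (x / y).
Proof. by move=> y_neq0; apply: Cext; rewrite /Cdiv /Cinv /Cmul /RtoC /=; field. Qed.

Lemma exp_quotient (x y u w l : R) : x + y = l + l + (u + w) ->
  Cmul (RtoC (exp u)) (RtoC (exp w)) <> C0 /\
  Cmul (RtoC (exp l)) (RtoC (exp l)) =
  Cdiv (Cmul (RtoC (exp x)) (RtoC (exp y))) (Cmul (RtoC (exp u)) (RtoC (exp w))).
Proof.
move=> exponents; have uw_pos := Rmult_lt_0_compat _ _ (exp_pos u) (exp_pos w).
have xy : exp x * exp y = exp l * exp l * (exp u * exp w).
  by rewrite -!exp_plus exponents.
rewrite -!RtoC_mul Cdiv_RtoC; last by lra.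
split; first by move=> /(congr1 fst) /= uw0; move: uw_pos; rewrite uw0; apply: Rlt_irrefl.
by rewrite xy; congr RtoC; field; split; apply: Rgt_not_eq; apply: exp_pos.
Qed.

Theorem mainTheorem6
  (K : nat) (nn : 'I_K -> nat)
  (V : finType) (r : V) (par : V -> V)
  (Htree : is_rooted_tree r par)
  (Hroot_leaf : is_leaf r par r)
  (psi : V -> grp nn -> R)
  (Hpsi_sum : forall v, v != r -> \big[Rplus/R0]_(g : grp nn) psi v g = R0)
  (Hpsi_sym : forall v, v != r -> forall g, psi v g = psi v (gopp g))
  (P : V -> grp nn -> grp nn -> R)
  (HP : forall v, v != r -> is_mexp (fun g h => psi v (gsub h g)) (P v))
  (v : V) (Hint : internal_edge r par v)
  (nu nu' : V)
  (Hends : (nu = par v /\ nu' = v) \/ (nu = v /\ nu' = par v))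
  (i j i' j' : V)
  (Hi : is_leaf r par i) (Hj : is_leaf r par j)
  (Hi' : is_leaf r par i') (Hj' : is_leaf r par j')
  (Hij : on_path r par i j nu /\ ~ on_path r par i j nu')
  (Hij' : on_path r par i' j' nu' /\ ~ on_path r par i' j' nu)
  (h : grp nn) :
  let z := zvec r par i j i' j' in
  let q := qF r par P in
  let o := g0 nn in
  let mh := gopp h in
  Cmul (q (z h mh o o)) (q (z o o mh h)) <> C0 /\
  Cmul (fourier (fedge P v) h) (fourier (fedge P v) h) =
  Cdiv (Cmul (q (z h o mh o)) (q (z o mh o h)))
       (Cmul (q (z h mh o o)) (q (z o o mh h))).
Proof.
move=> z q o mh; rewrite {}/z {}/q {}/o {}/mh.
have v_r := v_nonroot Hint.
have [par_root reach_root] := Htree.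
rewrite !(qF_exp Htree Hpsi_sym HP) (fourier_edge_exp (Hpsi_sym v v_r) (HP v v_r)).
apply: exp_quotient.
apply: (quartet_exponents par_root reach_root Hint Hends Hij Hij' Hi Hj Hi' Hj').
- by move=> w w_r; apply: lam_even (Hpsi_sym w w_r).
- by move=> w w_r; apply: lam0 (Hpsi_sum w w_r).
Qed.
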